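(* Let $X$ be a compact metric space and $f\colon X\to X$ continuous. Then $(X,f)$ has property $P_e$ if and only if $(X,f)$ has $\gamma$-restricted two-sided orbital limit shadowing.
   Context: A full trajectory is a sequence $\langle x_i\rangle_{i\in\mathbb Z}$ in $X$ with $f(x_i)=x_{i+1}$ for all $i\in\mathbb Z$. For a two-sided sequence $\langle x_i\rangle_{i\in\mathbb Z}$ in $X$, $\omega(\langle x_i\rangle)=\bigcap_{M\in\mathbb N}\overline{\{x_n: n>M\}}$ and $\alpha(\langle x_i\rangle)=\bigcap_{M\in\mathbb N}\overline{\{x_n: n<-M\}}$. A set $A\subseteq X$ is internally chain transitive if for all $a,b\in A$ and every $\delta>0$ there is a finite sequence $x_0=a,x_1,\dots,x_N=b$ in $A$ with $N\ge1$ and $d(f(x_i),x_{i+1})<\delta$ for all $i<N$; $ICT_f$ denotes the set of nonempty closed internally chain transitive subsets of $X$. Property $P_e$: for every $A\in ICT_f$ there is a full trajectory $\langle x_i\rangle_{i\in\mathbb Z}$ with $\alpha(\langle x_i\rangle)=\omega(\langle x_i\rangle)=A$. A two-sided asymptotic pseudo-orbit is a sequence $\langle x_i\rangle_{i\in\mathbb Z}$ with $d(f(x_i),x_{i+1})\to0$ as $i\to\pm\infty$. $(X,f)$ has $\gamma$-restricted two-sided orbital limit shadowing if for every two-sided asymptotic pseudo-orbit $\langle x_i\rangle_{i\in\mathbb Z}$ with $\alpha(\langle x_i\rangle)=\omega(\langle x_i\rangle)$ there is a full trajectory $\langle z_i\rangle_{i\in\mathbb Z}$ with $\alpha(\langle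 z_i\rangle)=\alpha(\langle x_i\rangle)$ and $\omega(\langle z_i\rangle)=\omega(\langle x_i\rangle)$. *)

From HB Require Import structures.
From mathcomp Require Import all_boot all_order all_algebra.
From mathcomp Require Import all_classical all_reals all_analysis.

Set Implicit Arguments. Unset Strict Implicit. Unset Printing Implicit Defensive.
Import Order.TTheory GRing.Theory Num.Theory.
Local Open Scope classical_set_scope.
Local Open Scope ring_scope.

Section Dyn.
Variables (R : realType) (X : pseudoMetricType R) (f : X -> X).

(* "d(x, y) < e" is rendered as  ball x e y. *)

Definition full_trajectory (x : int -> X) : Prop :=
  forall i : int, f (x i) = x (i + 1).

Definition omega_lim (x : int -> X) : set X :=
  \bigcap_(M in [set: nat]) closure [set x n | n in [set n : int | M%:Z < n]].

Definition alpha_lim (x : int -> X) : set X :=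
  \bigcap_(M in [set: nat]) closure [set x n | n in [set n : int | n < - M%:Z]].

Definition int_chain_transitive (A : set X) : Prop :=
  forall a b, A a -> A b -> forall delta : R, 0 < delta ->
    exists (N : nat) (x : nat -> X),
      (1 <= N)%N /\ x 0%N = a /\ x N = b /\
      (forall i, (i <= N)%N -> A (x i)) /\
      (forall i, (i < N)%N -> ball (f (x i)) delta (x i.+1)).

Definition ICT (A : set X) : Prop :=
  A !=set0 /\ closed A /\ int_chain_transitive A.

Definition property_Pe : Prop :=
  forall A, ICT A -> exists x : int -> X,
    full_trajectory x /\ alpha_lim x = A /\ omega_lim x = A.

Definition two_sided_asymptotic_pseudo_orbit (x : int -> X) : Prop :=
  forall eps : R, 0 < eps -> exists M : nat,
    forall i : int, (M%:Z < i \/ i < - M%:Z) -> ball (f (x i)) eps (x (i + 1)).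

Definition gamma_restricted_two_sided_orbital_limit_shadowing : Prop :=
  forall x : int -> X, two_sided_asymptotic_pseudo_orbit x ->
    alpha_lim x = omega_lim x ->
    exists z : int -> X, full_trajectory z /\
      alpha_lim z = alpha_lim x /\ omega_lim z = omega_lim x.

End Dyn.

From HB Require Import structures.
From mathcomp Require Import all_boot all_order all_algebra.
From mathcomp Require Import all_classical all_reals all_analysis.
From mathcomp Require Import lra zify.
Set Implicit Arguments. Unset Strict Implicit. Unset Printing Implicit Defensive.
Import Order.TTheory GRing.Theory Num.Theory.
Local Open Scope classical_set_scope.
Local Open Scope ring_scope.

(* Both implications reduce to two facts about compact systems.  First, the
   omega-limit set of an asymptotic pseudo-orbit is internally chain
   transitive: far along the orbit every point is close to the limit set, and
   uniform continuity of f turns the small steps of the orbit into small chain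
   steps between nearby points of the limit set.  Second, every closed ICT set
   A is both the alpha- and the omega-limit set of a two-sided asymptotic
   pseudo-orbit: for each k choose a 1/(k+1)-chain in A that leaves a base
   point a, visits a finite 1/(k+1)-net of A and returns to a; the loops laid
   end to end form the forward half, and the reversed loops the backward half.
   Property P_e then shadows the first kind of sequence, and shadowing realizes
   the second one by a true orbit. *)

Section CompactPseudoMetric.
Variables (R : realType) (X : pseudoMetricType R).

Lemma exists_natSinv_lt (r : R) : 0 < r -> exists k : nat, k.+1%:R^-1 < r.
Proof.
move=> r0; have [k _ /(_ k (leqnn k)) kr] := near_infty_natSinv_lt (PosNum r0).
by exists k.
Qed.

Lemma natSinv_le (m n : nat) : (m <= n)%N -> n.+1%:R^-1 <= m.+1%:R^-1 :> R.
Proof. by move=> mn; rewrite lef_pV2 ?posrE ?ltr0Sn // ler_nat. Qed.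

Lemma closure_ballP (S : set X) p :
  closure S p <-> forall r : R, 0 < r -> exists2 y, S y & ball p r y.
Proof.
split=> [clS r r0 | near_S B /nbhs_ballP [r r0 rB]].
  by have [y [Sy py]] := clS _ (nbhsx_ballx p r r0); exists y.
by have [y Sy py] := near_S r r0; exists y; split => //; exact: rB.
Qed.

Lemma compact_finite_net (A : set X) (r : R) : compact A -> 0 < r ->
  exists2 s : seq X, {subset s <= A} &
    forall p, A p -> exists2 y, y \in s & ball y r p.
Proof.
move=> cA r0; apply: contrapT => no_net.
pose U (s : seq X) := A `\` [set p | exists2 y, y \in s & ball y r p].
have PF : ProperFilter (filter_from [set s | {subset s <= A}] U).
  apply: filter_from_proper => [|s sA]; last first.
    apply: contrapT => Us0; apply: no_net; exists s => // p Ap.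
    by apply: contrapT => np; apply: Us0; exists p.
  apply: filter_from_filter => [|s1 s2 s1A s2A]; first by exists [::].
  exists (s1 ++ s2) => [y|p [Ap np]]; first by rewrite mem_cat => /orP[/s1A|/s2A].
  by split; split => // -[y ys yp]; apply: np; exists y; rewrite // mem_cat ys ?orbT.
have [|p [Ap clp]] := cA _ PF; first by exists [::] => // p [].
have [q [[_ nq] pq]] : U [:: p] `&` ball p r !=set0.
  apply: clp; last exact: nbhsx_ballx.
  by exists [:: p] => // y; rewrite mem_seq1 => /eqP ->; rewrite inE.
by apply: nq; exists p; rewrite ?mem_head.
Qed.

Hypothesis cX : compact [set: X].

Lemma decreasing_closure_bigcap_neq0 (B : nat -> set X) :
  (forall m n, (m <= n)%N -> B n `<=` B m) -> (forall n, B n !=set0) ->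
  exists p, forall n, closure (B n) p.
Proof.
move=> Bdecr Bne; pose F := filter_from [set: nat] B.
have PF : ProperFilter F.
  apply: filter_from_proper => //; apply: filter_from_filter; first by exists 0%N.
  move=> i j _ _; exists (maxn i j) => // y Bij.
  by split; apply: (Bdecr _ (maxn i j)); rewrite ?leq_maxl ?leq_maxr.
have [|p [_ clp]] := cX PF; first exact: filterT.
by exists p => n V pV; apply: clp => //; exists n.
Qed.

Lemma compact_unif_continuous (Y : pseudoMetricType R) (f : X -> Y) :
  continuous f -> unif_continuous f.
Proof.
move=> cf; apply/unif_continuousP => e e0; apply: contrapT => not_unif.
pose B n := [set u | exists2 v, ball u n.+1%:R^-1 v & ~ ball (f u) e (f v)].
have [m n mn u [v uv fuv] | n | p Bp] := decreasing_closure_bigcap_neq0 (B := B).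
- by exists v => //; apply: le_ball uv; exact: natSinv_le.
- apply: contrapT => Bn0; apply: not_unif; exists n.+1%:R^-1 => // -[u v] uv.
  by apply: contrapT => fuv; apply: Bn0; exists u, v.
have [r r0 fr] : exists2 r : R, 0 < r &
    forall u, ball p r u -> ball (f p) (e / 2) (f u).
  have /cvg_ballP /(_ (e / 2)) := cf p.
  by rewrite divr_gt0 // => /(_ isT) /nbhs_ballP [r r0 fr]; exists r.
have [n nr] := exists_natSinv_lt (divr_gt0 r0 (ltr0Sn R 1)).
have /closure_ballP /(_ (r / 2)) := Bp n.
rewrite divr_gt0 // => /(_ isT) [u [v uv fuv] pu]; apply: fuv.
have pv : ball p r v.
  by rewrite [r]splitr; apply: ball_triangle pu (le_ball (ltW nr) uv).
have pu' : ball p r u by apply: le_ball pu; lra.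
exact: ball_splitr (fr _ pu') (fr _ pv).
Qed.

End CompactPseudoMetric.

Section LimitSets.
Variables (R : realType) (X : pseudoMetricType R).
Implicit Types (x : int -> X) (A : set X).

Lemma omega_limP x p : omega_lim x p <->
  forall (M : nat) (r : R), 0 < r -> exists2 n : nat, (M < n)%N & ball p r (x n).
Proof.
split=> [xp M r r0 | near_xp M _].
  have /closure_ballP /(_ r r0) [_ [[n|//] Mn <-] pxn] := xp M I.
  by exists n; rewrite // -ltz_nat.
apply/closure_ballP => r r0; have [n Mn pxn] := near_xp M r r0.
by exists (x n) => //; exists n.
Qed.

Lemma omega_lim_eq x A : closed A -> (forall n : nat, A (x n)) ->
  (forall p, A p -> forall (M : nat) (r : R), 0 < r ->
     exists2 n : nat, (M < n)%N & ball p r (x n)) ->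
  omega_lim x = A.
Proof.
move=> clA xA near_A.
apply/seteqP; split=> [p /omega_limP xp | p /near_A /omega_limP //].
rewrite (closure_id A).1 //; apply/closure_ballP => r r0.
by have [n _ pxn] := xp 0%N r r0; exists (x n).
Qed.

Lemma alpha_lim_omega_lim x : alpha_lim x = omega_lim (fun i => x (- i)).
Proof.
rewrite /alpha_lim /omega_lim; congr (\bigcap_(M in _) closure _); apply/funext => M.
apply/seteqP; split=> _ [n /= Mn <-]; exists (- n); rewrite ?opprK //=.
  by rewrite ltrNr.
by rewrite ltrNl opprK.
Qed.

Hypothesis cX : compact [set: X].

Lemma omega_lim_eventually x U : open U -> omega_lim x `<=` U ->
  exists M : nat, forall n : nat, (M < n)%N -> U (x n).
Proof.
move=> oU xU; apply: contrapT => not_ev.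
pose B (M : nat) := [set x n | n in [set n : nat | (M < n)%N /\ ~ U (x n)]].
have [m n mn _ [k [nk Uk] <-] | M | p Bp] := decreasing_closure_bigcap_neq0 cX (B := B).
- by exists k => //; split => //; exact: leq_ltn_trans nk.
- apply: contrapT => BM0; apply: not_ev; exists M => n Mn.
  by apply: contrapT => Un; apply: BM0; exists (x n), n.
suff /xU : omega_lim x p.
  have : closure (~` U) p by apply: closureS (Bp 0%N) => _ [n [_ Un] <-].
  by rewrite -(closure_id _).1 //; exact: open_closedC.
move=> M _; apply: closureS (Bp M) => _ [n [Mn _] <-].
by exists n; rewrite // ltz_nat.
Qed.

Lemma omega_lim_neq0 x : omega_lim x !=set0.
Proof.
apply: contrapT => empty; have [|M /(_ M.+1)] := omega_lim_eventually (x := x) open0.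
  by move=> p xp; apply: empty; exists p.
by apply.
Qed.

Lemma omega_lim_attracts x (r : R) : 0 < r ->
  exists M : nat, forall n : nat, (M < n)%N -> exists2 c, omega_lim x c & ball c r (x n).
Proof.
move=> r0; pose U := \bigcup_(c in omega_lim x) (ball c r)°.
have [|c xc|M MU] := omega_lim_eventually (x := x) (U := U).
- by apply: bigcup_open => c _; exact: open_interior.
- by exists c => //; exact: nbhsx_ballx.
by exists M => n /MU [c xc /nbhs_singleton]; exists c.
Qed.

End LimitSets.

Section OmegaLimitICT.
Variables (R : realType) (X : pseudoMetricType R).
Hypothesis cX : compact [set: X].
Variables (f : X -> X) (hf : continuous f).

Lemma pseudo_orbit_tail x (r : R) : two_sided_asymptotic_pseudo_orbit f x -> 0 < r ->
  exists M : nat, forall n : nat, (M < n)%N -> ball (f (x n)) r (x n.+1).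
Proof.
move=> xpo r0; have [M HM] := xpo r r0; exists M => n Mn.
by have := HM n; rewrite ltz_nat Mn -addn1 PoszD; apply; left.
Qed.

Lemma omega_lim_ICT x : two_sided_asymptotic_pseudo_orbit f x -> ICT f (omega_lim x).
Proof.
move=> xpo; split; first exact: omega_lim_neq0.
split; first by apply: closed_bigI => M _; exact: closed_closure.
move=> a b xa xb d d0.
have /unif_continuousP /(_ (d / 3)) := compact_unif_continuous cX hf.
rewrite divr_gt0 // => /(_ isT) [r0 r00 fr0].
pose r := Num.min r0 (d / 3).
have r_gt0 : 0 < r by rewrite lt_min r00 divr_gt0.
have [M1 HM1] := pseudo_orbit_tail xpo r_gt0.
have [M2 HM2] := omega_lim_attracts cX x r_gt0.
have [m Mm am] := (omega_limP x a).1 xa (maxn M1 M2) r r_gt0.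
have [n mn bn] := (omega_limP x b).1 xb m r r_gt0.
have cP i : exists c, omega_lim x c /\ ((M2 < i)%N -> ball c r (x i)).
  have [/HM2 [c xc cr]|_] := ltnP M2 i; first by exists c.
  by exists a.
have [c Hc] := choice cP.
pose N := (n - m)%N.
pose y i := if i == 0%N then a else if i == N then b else c (m + i)%N.
have yP i : (i <= N)%N -> omega_lim x (y i) /\ ball (y i) r (x (m + i)%N).
  rewrite /y; case: eqP => [->|i0]; first by rewrite addn0.
  case: eqP => [->|iN]; first by rewrite subnKC // ltnW.
  have [xc cr] := Hc (m + i)%N; split => //; apply: cr.
  by rewrite ltn_addr // (leq_ltn_trans (leq_maxr M1 M2)).
exists N, y; split; first by rewrite subn_gt0.
split; first by [].
split; first by rewrite /y eqxx; case: eqP => // /eqP; rewrite subn_eq0 leqNgt mn.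
split; first by move=> i /yP [].
(* The step from y i to y i.+1 passes through f (x (m + i)) and x (m + i).+1. *)
move=> i iN; have [_ yi] := yP i (ltnW iN); have [_ yi1] := yP i.+1 iN.
have fyi : ball (f (y i)) (d / 3) (f (x (m + i)%N)).
  by apply: fr0 (y i, x (m + i)%N) _; apply: le_ball yi; rewrite ge_min lexx.
have xi : ball (f (x (m + i)%N)) r (x (m + i).+1).
  by apply: HM1; rewrite ltn_addr // (leq_ltn_trans (leq_maxl M1 M2)).
rewrite -addnS in xi.
have r3 : r <= d / 3 by rewrite ge_min lexx orbT.
by apply: le_ball (ball_triangle (ball_triangle fyi xi) (ball_sym yi1)); lra.
Qed.

End OmegaLimitICT.

Section LoopStream.
Variables (T : eqType) (x0 : T).

Lemma cycle_cons_cat (e : rel T) p q :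
  cycle e (x0 :: p) -> cycle e (x0 :: q) -> cycle e ((x0 :: p) ++ (x0 :: q)).
Proof. by rewrite /= rcons_cat cat_path /= !rcons_path => /andP[-> ->]. Qed.

Lemma cycle_cons_rev (e : rel T) p :
  cycle e (x0 :: p) -> cycle (fun u v => e v u) (x0 :: rev p).
Proof. by rewrite -[x0 :: rev p]rotr1_rcons -rev_cons rotr_cycle rev_cycle. Qed.

(* With default x0, the step out of the last element lands back on x0. *)
Lemma cycle_cons_nth (e : rel T) p i : cycle e (x0 :: p) -> (i <= size p)%N ->
  e (nth x0 (x0 :: p) i) (nth x0 (x0 :: p) i.+1).
Proof.
move=> /(pathP x0) cyc ip; have := cyc i; rewrite size_rcons ltnS => /(_ ip).
by rewrite -rcons_cons !nth_rcons_default.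
Qed.

Variable p : nat -> seq T.

Definition loops (m d : nat) : seq T := flatten [seq x0 :: p k | k <- iota m d].

(* The loops are nonempty, so the first n.+1 of them already reach position n. *)
Definition loop_stream (n : nat) : T := nth x0 (loops 0 n.+1) n.

Lemma loopsS m d : loops m d.+1 = x0 :: p m ++ loops m.+1 d.
Proof. by []. Qed.

Lemma loopsD m d1 d2 : loops m (d1 + d2) = loops m d1 ++ loops (m + d1) d2.
Proof. by rewrite /loops iotaD map_cat flatten_cat. Qed.

Lemma size_loops m d : (d <= size (loops m d))%N.
Proof.
elim: d m => // d IH m; rewrite loopsS /= size_cat ltnS.
exact: leq_trans (IH m.+1) (leq_addl _ _).
Qed.

Lemma loop_streamE K n :
  (n < size (loops 0 K))%N -> loop_stream n = nth x0 (loops 0 K) n.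
Proof.
move=> nK; rewrite /loop_stream; case: (leqP K n.+1) => [Kn|nK'].
  by rewrite -(subnKC Kn) loopsD nth_cat nK.
by rewrite -(subnKC (ltnW nK')) loopsD nth_cat (leq_trans _ (size_loops _ _)).
Qed.

Lemma loop_stream_block k j : (j <= size (p k))%N ->
  loop_stream (size (loops 0 k) + j) = nth x0 (x0 :: p k) j.
Proof.
have Ek : loops 0 k.+1 = loops 0 k ++ x0 :: p k.
  by rewrite -addn1 loopsD loopsS [loops _ 0]/loops /= cats0.
move=> jp; rewrite (@loop_streamE k.+1) Ek ?size_cat /= ?ltn_add2l ?ltnS //.
by rewrite nth_cat ltnNge leq_addr /= addKn.
Qed.

Lemma loop_stream_visits k y : y \in x0 :: p k ->
  exists2 n, (k <= n)%N & loop_stream n = y.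
Proof.
move=> yp; exists (size (loops 0 k) + index y (x0 :: p k))%N.
  exact: leq_trans (size_loops 0 k) (leq_addr _ _).
by rewrite loop_stream_block ?nth_index // -ltnS index_mem.
Qed.

Lemma loop_stream_mem n : exists k, loop_stream n \in x0 :: p k.
Proof.
have /flattenP [_ /mapP [k _ ->] yk] : loop_stream n \in loops 0 n.+1.
  exact/mem_nth/size_loops.
by exists k.
Qed.

Variable e : nat -> rel T.
Hypotheses (cycle_e : forall k, cycle (e k) (x0 :: p k))
  (e_decr : forall k j, (k <= j)%N -> subrel (e j) (e k)).

Lemma cycle_loops m d : cycle (e m) (loops m d.+1).
Proof.
elim: d m => [|d IH] m; first by rewrite loopsS cats0.
have := sub_cycle (e_decr (leqnSn m)) (IH m.+1).
by rewrite !loopsS; exact: cycle_cons_cat.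
Qed.

Lemma loop_stream_step K n : (size (loops 0 K) <= n)%N ->
  e K (loop_stream n) (loop_stream n.+1).
Proof.
move=> Sn; have KS := size_loops 0 K; have n2S := size_loops 0 n.+2.
rewrite !(@loop_streamE n.+2); try lia.
have E : loops 0 n.+2 = loops 0 K ++ x0 :: (p K ++ loops K.+1 (n.+1 - K)).
  by rewrite -loopsS -loopsD -subSn ?subnKC //; lia.
move: n2S; rewrite E => n2S.
rewrite !nth_cat ltnNge Sn ltnNge (leq_trans Sn) // (subSn Sn) /=.
apply: cycle_cons_nth; first exact: cycle_loops.
by move: n2S; rewrite !size_cat /= size_cat; lia.
Qed.

End LoopStream.

Lemma path_iota (T : Type) (e : rel T) (y : nat -> T) m N :
  (forall i, (m <= i < m + N)%N -> e (y i) (y i.+1)) ->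
  path e (y m) [seq y i | i <- iota m.+1 N].
Proof.
elim: N m => //= N IH m ey; rewrite ey ?leqnn ?addnS ?ltnS ?leq_addr //=.
by apply: IH => i /andP [mi iN]; apply: ey; rewrite ltnW //= addnS.
Qed.

Section PathThrough.
Variables (T : eqType) (e : rel T) (A : set T).
Hypothesis chainA : forall u v, A u -> A v ->
  exists2 q, path e u (rcons q v) & {subset q <= A}.

Lemma path_through (s : seq T) u v : {subset s <= A} -> A u -> A v ->
  exists q, [/\ path e u (rcons q v), {subset q <= A} & {subset s <= q}].
Proof.
elim: s u => [|h s IH] u sA Au Av; first by have [q] := chainA Au Av; exists q.
have Ah : A h by rewrite -inE; apply: sA; exact: mem_head.
have [q1 p1 q1A] := chainA Au Ah.
have [|q2 [p2 q2A sq2]] := IH h _ Ah Av.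
  by move=> y ys; apply: sA; rewrite inE ys orbT.
exists (q1 ++ h :: q2); split.
- by rewrite rcons_cat rcons_cons -cat_rcons cat_path p1 last_rcons.
- by move=> y; rewrite mem_cat inE => /or3P [/q1A|/eqP ->|/q2A] //; rewrite inE.
- by move=> y; rewrite inE mem_cat inE => /orP [->|/sq2 ->]; rewrite ?orbT.
Qed.

End PathThrough.

Section Construction.
Variables (R : realType) (X : pseudoMetricType R) (f : X -> X).

Definition pseudo_step (d : R) : rel X := fun u v => `[< ball (f u) d v >].

Lemma pseudo_step_le (d d' : R) : d <= d' -> subrel (pseudo_step d) (pseudo_step d').
Proof. by move=> dd' u v /asboolP uv; apply/asboolP; exact: le_ball uv. Qed.

Hypothesis cX : compact [set: X].
Variables (A : set X) (a : X).
Hypotheses (Aa : A a) (clA : closed A) (ictA : int_chain_transitive f A).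

Lemma int_chain_transitive_path (d : R) u v : 0 < d -> A u -> A v ->
  exists2 q, path (pseudo_step d) u (rcons q v) & {subset q <= A}.
Proof.
move=> d0 Au Av; have [N [y [N1 [y0 [yN [yA ystep]]]]]] := ictA Au Av d0.
case: N N1 yN yA ystep => // N _ yN yA ystep.
exists [seq y i | i <- iota 1 N].
  have -> : rcons [seq y i | i <- iota 1 N] v = [seq y i | i <- iota 1 N.+1].
    by rewrite -[N.+1]addn1 iotaD map_cat add1n cats1 yN.
  rewrite -y0.
  by apply: path_iota => i /andP [_ iN]; apply/asboolP; exact: ystep.
move=> z /mapP [i]; rewrite mem_iota add1n => /andP [_ iN] ->.
by rewrite inE; apply: yA; exact: ltnW.
Qed.

Let mesh (k : nat) : R := k.+1%:R^-1.

Lemma mesh_gt0 k : 0 < mesh k.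
Proof. by rewrite invr_gt0 ltr0Sn. Qed.

Lemma exists_loop_net k : exists p : seq X, [/\ cycle (pseudo_step (mesh k)) (a :: p),
  {subset a :: p <= A} & forall q, A q -> exists2 y, y \in a :: p & ball y (mesh k) q].
Proof.
have cA : compact A by exact: subclosed_compact clA cX (subsetT A).
have [s sA snet] := compact_finite_net cA (mesh_gt0 k).
have chainA u v : A u -> A v ->
    exists2 q, path (pseudo_step (mesh k)) u (rcons q v) & {subset q <= A}.
  exact: int_chain_transitive_path (mesh_gt0 k).
have [p [pcyc pA sp]] := path_through chainA sA Aa Aa.
exists p; split => //.
  by move=> y; rewrite inE => /orP [/eqP ->|/pA //]; rewrite inE.
by move=> q /snet [y /sp ys yq]; exists y; rewrite // inE ys orbT.
Qed.

Lemma loop_stream_in p :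
  (forall k, {subset a :: p k <= A}) -> forall n, A (loop_stream a p n).
Proof. by move=> pA n; have [k /pA] := loop_stream_mem a p n; rewrite inE. Qed.

Lemma loop_stream_dense p :
  (forall k q, A q -> exists2 y, y \in a :: p k & ball y (mesh k) q) ->
  forall q, A q -> forall (M : nat) (r : R), 0 < r ->
  exists2 n : nat, (M < n)%N & ball q r (loop_stream a p n).
Proof.
move=> pnet q Aq M r r0; have [k0 k0r] := exists_natSinv_lt r0.
have [y /loop_stream_visits [n kn <-] yq] := pnet (maxn k0 M.+1) q Aq.
exists n; first exact: leq_trans (leq_maxr _ _) kn.
apply/ball_sym; apply: le_ball yq; apply/ltW; apply: le_lt_trans k0r.
by apply: natSinv_le; exact: leq_maxl.
Qed.

Lemma loop_stream_eventually (e : R -> rel X) p :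
  (forall r r', r <= r' -> subrel (e r) (e r')) ->
  (forall k, cycle (e (mesh k)) (a :: p k)) ->
  forall r : R, 0 < r -> exists M : nat, forall n : nat, (M <= n)%N ->
    e r (loop_stream a p n) (loop_stream a p n.+1).
Proof.
move=> e_le pcyc r r0; have [K Kr] := exists_natSinv_lt r0.
have e_decr k j : (k <= j)%N -> subrel (e (mesh j)) (e (mesh k)).
  by move=> kj; apply/e_le/natSinv_le.
exists (size (loops a p 0 K)) => n Kn; apply: e_le (ltW Kr) _ _ _.
exact: (loop_stream_step pcyc e_decr Kn).
Qed.

Lemma ICT_asymptotic_pseudo_orbit : exists x : int -> X,
  [/\ two_sided_asymptotic_pseudo_orbit f x, alpha_lim x = A & omega_lim x = A].
Proof.
have [p /all_and3 [pcyc pA pnet]] := choice exists_loop_net.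
pose p' k := rev (p k).
(* Backward in time x runs through the reversed loops, so that read forward it
   is again a pseudo-orbit. *)
pose x i := match i with
  | Posz n => loop_stream a p n
  | Negz n => loop_stream a p' n
  end.
have p'A k : {subset a :: p' k <= A}.
  by move=> y; rewrite in_cons mem_rev -in_cons; exact: pA.
have p'net k q : A q -> exists2 y, y \in a :: p' k & ball y (mesh k) q.
  by move=> /(pnet k) [y yp yq]; exists y; rewrite // in_cons mem_rev -in_cons.
have xA i : A (x i) by case: i => n; apply: loop_stream_in.
exists x; split.
- move=> r r0.
  have [M1 HM1] := loop_stream_eventually pseudo_step_le pcyc r0.
  have [M2 HM2] := @loop_stream_eventually (fun r u v => pseudo_step r v u) p'
    (fun r r' rr' u v => @pseudo_step_le r r' rr' v u)
    (fun k => cycle_cons_rev (pcyc k)) r r0.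
  exists (maxn M1 M2).+1 => -[n|n] [Mn|Mn].
  + apply/asboolP; rewrite (_ : _ + 1 = n.+1%:Z); last by lia.
    by apply: HM1; move: Mn; rewrite ltz_nat; lia.
  + by move: Mn; lia.
  + by move: Mn; lia.
  + case: n Mn => [|n] Mn; first by lia.
    apply/asboolP; rewrite (_ : _ + 1 = Negz n); last by lia.
    by apply: HM2; move: Mn; lia.
- rewrite alpha_lim_omega_lim.
  apply: (omega_lim_eq (x := fun i => x (- i)) clA (fun n => xA _)) => q Aq M r r0.
  have [n Mn qn] := loop_stream_dense p'net Aq M r0.
  by exists n.+1; [exact: ltnW | rewrite -NegzE].
- apply: omega_lim_eq clA (fun n => xA n) _ => q Aq M r r0.
  by have [n Mn qn] := loop_stream_dense pnet Aq M r0; exists n.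
Qed.

End Construction.

Theorem mainTheorem1 (R : realType) (X : pseudoMetricType R)
  (hX : hausdorff_space X) (cX : compact [set: X])
  (f : X -> X) (hf : continuous f) :
  property_Pe f <-> gamma_restricted_two_sided_orbital_limit_shadowing f.
Proof.
split=> [Pe x xpo alpha_omega | shadow A [[a Aa] [clA ictA]]].
  have [z [fz [za zo]]] := Pe _ (omega_lim_ICT cX hf xpo).
  by exists z; rewrite za zo alpha_omega.
have [x [xpo xa xo]] := ICT_asymptotic_pseudo_orbit cX Aa clA ictA.
have [|z [fz [za zo]]] := shadow x xpo; first by rewrite xa xo.
by exists z; rewrite za zo xa xo.
Qed.
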